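(* For any set of rule schemes $\mathcal{R}\subseteq\{N,H,P,F,wF\}$, if a sequent $\Gamma\Rightarrow A$ is valid in every $\mathbf{K}(\mathcal{R})$-Kripke model, then $i\mathbf{STL}(\mathcal{R})\vdash\Gamma\Rightarrow A$.
   Context: Formulas of $\mathcal{L}_\nabla$ are built from variables and constants $1,\top,\bot$ by $\wedge,\vee,\otimes,\to$ and unary $\nabla$. Sequents $\Gamma\Rightarrow A$ have $\Gamma$ a finite sequence; $\nabla\Gamma$ applies $\nabla$ to each member. $\mathbf{STL}$ has axioms $A\Rightarrow A$, $\Rightarrow1$, $\nabla1\Rightarrow1$, $\Gamma\Rightarrow\top$, $\Gamma,\bot,\Sigma\Rightarrow A$ and rules (premises / conclusion): cut: $\Gamma\Rightarrow A$, $\Pi,A,\Sigma\Rightarrow B$ / $\Pi,\Gamma,\Sigma\Rightarrow B$; $L\wedge$: $\Gamma,A,\Sigma\Rightarrow C$ / $\Gamma,A\wedge B,\Sigma\Rightarrow C$ and $\Gamma,B,\Sigma\Rightarrow C$ / $\Gamma,A\wedge B,\Sigma\Rightarrow C$; $R\wedge$: $\Gamma\Rightarrow A$, $\Gamma\Rightarrow B$ / $\Gamma\Rightarrow A\wedge B$; $L\vee$: $\Gamma,A,\Sigma\Rightarrow C$, $\Gamma,B,\Sigma\Rightarrow C$ / $\Gamma,A\vee B,\Sigma\Rightarrow C$; $R\vee$: $\Gamma\Rightarrow A$ / $\Gamma\Rightarrow A\vee B$ and $\Gamma\Rightarrow B$ / $\Gamma\Rightarrow A\vee B$; $L1$: $\Gamma,\Sigma\Rightarrow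 A$ / $\Gamma,1,\Sigma\Rightarrow A$; $L\otimes$: $\Gamma,A,B,\Sigma\Rightarrow C$ / $\Gamma,A\otimes B,\Sigma\Rightarrow C$; $R\otimes$: $\Gamma\Rightarrow A$, $\Sigma\Rightarrow B$ / $\Gamma,\Sigma\Rightarrow A\otimes B$; $(\nabla)$: $A\Rightarrow B$ / $\nabla A\Rightarrow\nabla B$; Oplax: $\nabla A,\nabla B\Rightarrow C$ / $\nabla(A\otimes B)\Rightarrow C$; $L\to$: $\Gamma\Rightarrow A$, $\Pi,B,\Sigma\Rightarrow C$ / $\Pi,\Gamma,\nabla(A\to B),\Sigma\Rightarrow C$; $R\to$: $A,\nabla\Gamma\Rightarrow B$ / $\Gamma\Rightarrow A\to B$. Schemes: $(N)$: $\Gamma\Rightarrow A$ / $\nabla\Gamma\Rightarrow\nabla A$; $(P)$: $\Gamma\Rightarrow\nabla A$ / $\Gamma\Rightarrow A$; $(F)$: $\Gamma\Rightarrow A$ / $\Gamma\Rightarrow\nabla A$; $(wF)$: $\nabla A\Rightarrow\bot$ / $A\Rightarrow\bot$; $(H)$: $\Gamma,A_1\to B_1,\dots,A_n\to B_n\Rightarrow C$ / $\nabla\Gamma,\nabla A_1\to\nabla B_1,\dots,\nabla A_n\to\nabla B_n\Rightarrow\nabla C$. $i\mathbf{STL}(\mathcal{R})$ is $\mathbf{STL}$ plus the schemes in $\mathcal{R}$ plus left weakening, contraction and exchange. A Kripke model is $(W,\le,R,V)$: $(W,\le)$ a poset, $R\subseteq W\times W$ with $(u,v)\in R$, $u'\le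 u$, $v\le v'$ implying $(u',v')\in R$, and $V$ assigning an upset to each variable. Forcing: $w\Vdash p$ iff $w\in V(p)$; $\top$, $1$ always forced; $\bot$ never; $\wedge$ and $\otimes$ both as conjunction; $\vee$ as disjunction; $w\Vdash A\to B$ iff for all $v$ with $(w,v)\in R$, $v\Vdash A$ implies $v\Vdash B$; $w\Vdash\nabla A$ iff there is $v$ with $(v,w)\in R$ and $v\Vdash A$. $\Gamma\Rightarrow A$ is valid if every $w$ forcing all of $\Gamma$ forces $A$. A $\mathbf{K}(\mathcal{R})$-Kripke model satisfies: for $(N)$, there is an order-preserving $\pi:W\to W$ with $(u,v)\in R$ iff $u\le\pi(v)$; for $(H)$, such $\pi$ exists and is an order isomorphism; for $(P)$, $R\subseteq\le$; for $(F)$, $R$ reflexive; for $(wF)$, $R$ serial; for each scheme in $\mathcal{R}$. *)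

From Stdlib Require Import List.
Import ListNotations.

Inductive form : Type :=
| Var : nat -> form
| One : form
| Top : form
| Bot : form
| And : form -> form -> form
| Or : form -> form -> form
| Tens : form -> form -> form
| Imp : form -> form -> form
| Nabla : form -> form.

Inductive scheme : Type := SN | SH | SP | SF | SwF.

Inductive prv (Rs : scheme -> Prop) : list form -> form -> Prop :=
| ax_id : forall A, prv Rs [A] A
| ax_one : prv Rs [] One
| ax_nabla_one : prv Rs [Nabla One] One
| ax_top : forall G, prv Rs G Top
| ax_bot : forall G S A, prv Rs (G ++ Bot :: S) A
| r_cut : forall G P S A B,
    prv Rs G A -> prv Rs (P ++ A :: S) B -> prv Rs (P ++ G ++ S) B
| r_andL1 : forall G S A B C,
    prv Rs (G ++ A :: S) C -> prv Rs (G ++ And A B :: S) C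
| r_andL2 : forall G S A B C,
    prv Rs (G ++ B :: S) C -> prv Rs (G ++ And A B :: S) C
| r_andR : forall G A B, prv Rs G A -> prv Rs G B -> prv Rs G (And A B)
| r_orL : forall G S A B C,
    prv Rs (G ++ A :: S) C -> prv Rs (G ++ B :: S) C -> prv Rs (G ++ Or A B :: S) C
| r_orR1 : forall G A B, prv Rs G A -> prv Rs G (Or A B)
| r_orR2 : forall G A B, prv Rs G B -> prv Rs G (Or A B)
| r_oneL : forall G S A, prv Rs (G ++ S) A -> prv Rs (G ++ One :: S) A
| r_tensL : forall G S A B C,
    prv Rs (G ++ A :: B :: S) C -> prv Rs (G ++ Tens A B :: S) C
| r_tensR : forall G S A B, prv Rs G A -> prv Rs S B -> prv Rs (G ++ S) (Tens A B)
| r_nabla : forall A B, prv Rs [A] B -> prv Rs [Nabla A] (Nabla B)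
| r_oplax : forall A B C,
    prv Rs [Nabla A; Nabla B] C -> prv Rs [Nabla (Tens A B)] C
| r_impL : forall G P S A B C,
    prv Rs G A -> prv Rs (P ++ B :: S) C ->
    prv Rs (P ++ G ++ Nabla (Imp A B) :: S) C
| r_impR : forall G A B, prv Rs (A :: map Nabla G) B -> prv Rs G (Imp A B)
| s_N : forall G A, Rs SN -> prv Rs G A -> prv Rs (map Nabla G) (Nabla A)
| s_P : forall G A, Rs SP -> prv Rs G (Nabla A) -> prv Rs G A
| s_F : forall G A, Rs SF -> prv Rs G A -> prv Rs G (Nabla A)
| s_wF : forall A, Rs SwF -> prv Rs [Nabla A] Bot -> prv Rs [A] Bot
| s_H : forall G (ps : list (form * form)) C, Rs SH ->
    prv Rs (G ++ map (fun p => Imp (fst p) (snd p)) ps) C ->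
    prv Rs (map Nabla G ++ map (fun p => Imp (Nabla (fst p)) (Nabla (snd p))) ps) (Nabla C)
| r_weak : forall G S A C, prv Rs (G ++ S) C -> prv Rs (G ++ A :: S) C
| r_contr : forall G S A C, prv Rs (G ++ A :: A :: S) C -> prv Rs (G ++ A :: S) C
| r_exch : forall G S A B C, prv Rs (G ++ A :: B :: S) C -> prv Rs (G ++ B :: A :: S) C.

Record KModel : Type := {
  W : Type;
  le : W -> W -> Prop;
  R : W -> W -> Prop;
  V : nat -> W -> Prop;
  le_refl : forall u, le u u;
  le_trans : forall u v w, le u v -> le v w -> le u w;
  le_antisym : forall u v, le u v -> le v u -> u = v;
  R_mono : forall u v u' v', R u v -> le u' u -> le v v' -> R u' v';
  V_up : forall p u v, V p u -> le u v -> V p v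
}.

Fixpoint forces (M : KModel) (w : W M) (A : form) : Prop :=
  match A with
  | Var p => V M p w
  | One => True
  | Top => True
  | Bot => False
  | And B C => forces M w B /\ forces M w C
  | Tens B C => forces M w B /\ forces M w C
  | Or B C => forces M w B \/ forces M w C
  | Imp B C => forall v, R M w v -> forces M v B -> forces M v C
  | Nabla B => exists v, R M v w /\ forces M v B
  end.

Definition valid_in (M : KModel) (G : list form) (A : form) : Prop :=
  forall w : W M, (forall B, In B G -> forces M w B) -> forces M w A.

Definition order_preserving (M : KModel) (pi : W M -> W M) : Prop :=
  forall u v, le M u v -> le M (pi u) (pi v).

Definition order_iso (M : KModel) (pi : W M -> W M) : Prop :=
  exists g : W M -> W M,
    (forall u, g (pi u) = u) /\ (forall u, pi (g u) = u) /\
    order_preserving M pi /\ order_preserving M g.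

Definition R_via (M : KModel) (pi : W M -> W M) : Prop :=
  forall u v, R M u v <-> le M u (pi v).

Definition K_model (Rs : scheme -> Prop) (M : KModel) : Prop :=
  (Rs SN -> exists pi, order_preserving M pi /\ R_via M pi) /\
  (Rs SH -> exists pi, order_preserving M pi /\ R_via M pi /\ order_iso M pi) /\
  (Rs SP -> forall u v, R M u v -> le M u v) /\
  (Rs SF -> forall u, R M u u) /\
  (Rs SwF -> forall u, exists v, R M u v).

From Stdlib Require Import List Permutation Classical FunctionalExtensionality
  PropExtensionality ProofIrrelevance Cantor Lia.
Import ListNotations.

(* Completeness via the canonical model. Its worlds are the prime theories of
   iSTL(Rs), ordered by inclusion, with [R u v] iff [nabla A] is in [v] whenever
   [A] is in [u]. A Lindenbaum lemma, extending a set to a prime theory that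
   avoids a set of formulas closed under disjunction, gives the witnesses the
   truth lemma needs for [->] and [nabla]. Each scheme makes the canonical frame
   satisfy its condition: under (N) the map pi v = {A | nabla A in v} is a prime
   theory again and [R u v] is [u <= pi v]; under (H) pi has the inverse
   v |-> {A | 1 -> A in v}, because (H) makes [nabla] and [1 -> _] mutually
   inverse up to provable equivalence. *)

Local Notation box A := (Imp One A).

Lemma list_in_some_stage {X : Type} (C : nat -> X -> Prop) (L : list X) :
  (forall n m x, n <= m -> C n x -> C m x) ->
  (forall x, In x L -> exists n, C n x) -> exists N, forall x, In x L -> C N x.
Proof.
  intros Hmono. induction L as [|a L IH]; intros HL.
  - exists 0. intros x [].
  - destruct (HL a (or_introl eq_refl)) as [n Hn].
    destruct IH as [N HN]; [intros x Hx; apply HL; right; exact Hx|].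
    exists (max n N). intros x [<-|Hx].
    + apply Hmono with n; [lia|exact Hn].
    + apply Hmono with N; [lia|exact (HN x Hx)].
Qed.

Fixpoint form_code (A : form) : nat :=
  match A with
  | Var n => to_nat (0, n)
  | One => to_nat (1, 0)
  | Top => to_nat (2, 0)
  | Bot => to_nat (3, 0)
  | And a b => to_nat (4, to_nat (form_code a, form_code b))
  | Or a b => to_nat (5, to_nat (form_code a, form_code b))
  | Tens a b => to_nat (6, to_nat (form_code a, form_code b))
  | Imp a b => to_nat (7, to_nat (form_code a, form_code b))
  | Nabla a => to_nat (8, form_code a)
  end.

Lemma to_nat_inj p q : to_nat p = to_nat q -> p = q.
Proof. intro H. rewrite <- (cancel_of_to p), <- (cancel_of_to q), H. reflexivity. Qed.

Lemma form_code_inj A B : form_code A = form_code B -> A = B.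
Proof.
  revert B.
  induction A; destruct B; intro H; cbn [form_code] in H; apply to_nat_inj in H;
    try discriminate; try reflexivity; apply (f_equal snd) in H; cbn [snd] in H;
    try (apply to_nat_inj in H;
         pose proof (f_equal fst H) as H1; pose proof (f_equal snd H) as H2;
         cbn [fst snd] in H1, H2);
    f_equal; auto.
Qed.

Section Completeness.
Variable Rs : scheme -> Prop.

Lemma prv_perm_app L L' A : Permutation L L' ->
  forall G, prv Rs (G ++ L) A -> prv Rs (G ++ L') A.
Proof.
  induction 1 as [| x L L' _ IH | x y L | L L' L'' _ IH1 _ IH2]; intros G H; auto.
  - specialize (IH (G ++ [x])). rewrite <- !app_assoc in IH. exact (IH H).
  - exact (r_exch Rs G L y x A H).
Qed.

Lemma prv_perm L L' A : Permutation L L' -> prv Rs L A -> prv Rs L' A.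
Proof. intros HP. exact (prv_perm_app L L' A HP []). Qed.

Lemma prv_weaken_cons X L A : prv Rs L A -> prv Rs (X :: L) A.
Proof. exact (r_weak Rs [] L X A). Qed.

Lemma prv_weaken_app K L A : prv Rs L A -> prv Rs (K ++ L) A.
Proof. induction K; simpl; auto using prv_weaken_cons. Qed.

Lemma prv_contract_in x L A : In x L -> prv Rs (x :: L) A -> prv Rs L A.
Proof.
  intros Hin H. destruct (in_split _ _ Hin) as [L1 [L2 ->]].
  apply prv_perm with (x :: L1 ++ L2); [apply Permutation_middle|].
  apply (r_contr Rs [] (L1 ++ L2) x A). simpl.
  eapply prv_perm; [|exact H]. apply perm_skip, Permutation_sym, Permutation_middle.
Qed.

Lemma prv_incl L L' A : prv Rs L A -> incl L L' -> prv Rs L' A.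
Proof.
  intros H Hincl.
  assert (HLL' : prv Rs (L ++ L') A).
  { eapply prv_perm; [apply Permutation_app_comm|]. apply prv_weaken_app, H. }
  clear H. induction L as [|a L IH]; simpl in *; auto.
  apply IH; [intros y Hy; apply Hincl; right; exact Hy|].
  apply prv_contract_in with a; [|exact HLL'].
  apply in_or_app. right. apply Hincl. left. reflexivity.
Qed.

Lemma prv_pair_l A B : prv Rs [A; B] A.
Proof. exact (r_weak Rs [A] [] B A (ax_id Rs A)). Qed.

Lemma prv_pair_r A B : prv Rs [A; B] B.
Proof. apply prv_weaken_cons, ax_id. Qed.

Lemma prv_cut_app L K A B : prv Rs L A -> prv Rs (A :: K) B -> prv Rs (L ++ K) B.
Proof. exact (r_cut Rs L [] K A B). Qed.

Lemma prv_cut_r L A B : prv Rs L A -> prv Rs [A] B -> prv Rs L B.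
Proof. intros HA HB. rewrite <- (app_nil_r L). exact (prv_cut_app L [] A B HA HB). Qed.

Lemma prv_cut_map (f : form -> form) C L : (forall x, In x L -> prv Rs [f x] x) ->
  forall G, prv Rs (G ++ L) C -> prv Rs (G ++ map f L) C.
Proof.
  induction L as [|a L IH]; intros Hf G H; simpl; auto.
  pose proof (r_cut Rs [f a] G L a C (Hf a (or_introl eq_refl)) H) as Hfa.
  replace (G ++ [f a] ++ L) with ((G ++ [f a]) ++ L) in Hfa by (symmetry; apply app_assoc).
  apply IH in Hfa; [|intros x Hx; apply Hf; right; exact Hx].
  rewrite <- app_assoc in Hfa. exact Hfa.
Qed.

Lemma prv_nabla_box_elim X : prv Rs [Nabla (box X)] X.
Proof. exact (r_impL Rs [] [] [] One X X (ax_one Rs) (ax_id Rs X)). Qed.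

Lemma prv_box_rule L C : prv Rs L C -> prv Rs (map (fun x => box x) L) (box C).
Proof.
  intro H. apply r_impR, prv_weaken_cons. rewrite map_map.
  exact (prv_cut_map (fun x => Nabla (box x)) C L (fun x _ => prv_nabla_box_elim x) [] H).
Qed.

Lemma prv_box_nabla_intro X : prv Rs [X] (box (Nabla X)).
Proof. apply (r_impR Rs [X]), (r_oneL Rs [] [Nabla X]), ax_id. Qed.

Lemma prv_nabla_or A B : prv Rs [Nabla (Or A B)] (Or (Nabla A) (Nabla B)).
Proof.
  apply prv_cut_r with (Nabla (box (Or (Nabla A) (Nabla B)))); [|apply prv_nabla_box_elim].
  apply r_nabla, (r_orL Rs [] [] A B).
  - apply (r_impR Rs [A]), (r_oneL Rs [] [Nabla A]), r_orR1, ax_id.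
  - apply (r_impR Rs [B]), (r_oneL Rs [] [Nabla B]), r_orR2, ax_id.
Qed.

Lemma prv_nabla_bot : prv Rs [Nabla Bot] Bot.
Proof.
  apply prv_cut_r with (Nabla (box Bot)); [|apply prv_nabla_box_elim].
  apply r_nabla. exact (ax_bot Rs [] [] _).
Qed.

Definition big_tens (L : list form) : form := fold_right Tens One L.

Lemma prv_big_tens L : prv Rs L (big_tens L).
Proof.
  induction L as [|a L IH]; simpl; [apply ax_one|].
  exact (r_tensR Rs [a] L a (big_tens L) (ax_id Rs a) IH).
Qed.

(* Oplax is what lets the hypotheses [nabla A_i] be merged into one [nabla]. *)
Lemma prv_nabla_big_tens D L : forall G,
  prv Rs (G ++ map Nabla L) D -> prv Rs (G ++ [Nabla (big_tens L)]) D.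
Proof.
  induction L as [|a L IH]; intros G H; simpl in *.
  - apply (r_weak Rs G [] (Nabla One)). rewrite app_nil_r in *. exact H.
  - specialize (IH (G ++ [Nabla a])). rewrite <- !app_assoc in IH. simpl in IH.
    pose proof (r_tensL Rs G [] _ _ D (IH H)) as Htens.
    pose proof (r_oplax Rs a (big_tens L) _
      (r_tensR Rs [Nabla a] [Nabla (big_tens L)] _ _ (ax_id Rs _) (ax_id Rs _))) as Hoplax.
    exact (r_cut Rs _ G [] _ D Hoplax Htens).
Qed.

Lemma prv_nabla_rule L A : Rs SN \/ Rs SH -> prv Rs L A -> prv Rs (map Nabla L) (Nabla A).
Proof.
  intros [HN|HH] H; [exact (s_N Rs L A HN H)|].
  pose proof (s_H Rs L [] A HH) as HsH. simpl in HsH. rewrite !app_nil_r in HsH.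
  exact (HsH H).
Qed.

Section SchemeH.
Hypothesis HH : Rs SH.

Lemma prv_H_box X : prv Rs [Imp (Nabla One) (Nabla X)] (Nabla (box X)).
Proof. exact (s_H Rs [] [(One, X)] (box X) HH (ax_id Rs _)). Qed.

Lemma prv_nabla_box_intro X : prv Rs [X] (Nabla (box X)).
Proof.
  apply prv_cut_r with (Imp (Nabla One) (Nabla X)); [|apply prv_H_box].
  apply (r_impR Rs [X]), prv_weaken_cons, ax_id.
Qed.

Lemma prv_box_nabla_elim X : prv Rs [box (Nabla X)] X.
Proof.
  apply prv_cut_r with (Imp (Nabla One) (Nabla X)).
  - apply (r_impR Rs [box (Nabla X)]), prv_weaken_cons, prv_nabla_box_elim.
  - apply prv_cut_r with (Nabla (box X)); [exact (prv_H_box X)|apply prv_nabla_box_elim].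
Qed.

Lemma prv_box_or A B : prv Rs [box (Or A B)] (Or (box A) (box B)).
Proof.
  apply prv_cut_r with (box (Nabla (Or (box A) (box B)))); [|apply prv_box_nabla_elim].
  apply (prv_box_rule [Or A B]), (r_orL Rs [] [] A B).
  - apply prv_cut_r with (Nabla (box A)); [apply prv_nabla_box_intro|].
    apply r_nabla, r_orR1, ax_id.
  - apply prv_cut_r with (Nabla (box B)); [apply prv_nabla_box_intro|].
    apply r_nabla, r_orR2, ax_id.
Qed.

Lemma prv_box_bot : prv Rs [box Bot] Bot.
Proof.
  apply prv_cut_r with (box (Nabla Bot)); [|apply prv_box_nabla_elim].
  apply (prv_box_rule [Bot]). exact (ax_bot Rs [] [] _).
Qed.

End SchemeH.

Definition der (T : form -> Prop) (A : form) : Prop :=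
  exists L, (forall x, In x L -> T x) /\ prv Rs L A.

Definition extend (T : form -> Prop) (A : form) : form -> Prop := fun x => T x \/ x = A.

Lemma der_mono (T T' : form -> Prop) A :
  (forall x, T x -> T' x) -> der T A -> der T' A.
Proof. intros H [L [HL HLA]]. exists L. split; auto. Qed.

Lemma der_extend T A B : der (extend T A) B ->
  exists L, (forall x, In x L -> T x) /\ prv Rs (A :: L) B.
Proof.
  intros [L [HL HLB]].
  assert (Hsplit : exists L0, (forall x, In x L0 -> T x) /\ incl L (A :: L0)).
  { clear HLB. induction L as [|a L IH].
    - exists []. split; [intros x []|intros x []].
    - destruct IH as [L0 [HL0 Hincl]]; [intros x Hx; apply HL; right; exact Hx|].
      destruct (HL a (or_introl eq_refl)) as [Ha| ->].
      + exists (a :: L0). split; [intros x [<-|Hx]; auto|].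
        intros x [<-|Hx]; [right; left; reflexivity|].
        destruct (Hincl x Hx) as [<-|Hx']; [left|right; right]; auto.
      + exists L0. split; [exact HL0|]. intros x [<-|Hx]; [left; reflexivity|auto]. }
  destruct Hsplit as [L0 [HL0 Hincl]].
  exists L0. split; [exact HL0|]. exact (prv_incl L (A :: L0) B HLB Hincl).
Qed.

Lemma der_cut T A B : der (extend T A) B -> der T A -> der T B.
Proof.
  intros HB [L [HL HLA]]. destruct (der_extend T A B HB) as [K [HK HKB]].
  exists (L ++ K). split; [intros x Hx; apply in_app_or in Hx; destruct Hx; auto|].
  exact (prv_cut_app L K A B HLA HKB).
Qed.

Lemma der_orL T A B C : T (Or A B) ->
  der (extend T A) C -> der (extend T B) C -> der T C.
Proof.
  intros HAB HA HB.
  destruct (der_extend T A C HA) as [K1 [HK1 HK1C]].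
  destruct (der_extend T B C HB) as [K2 [HK2 HK2C]].
  exists (Or A B :: K1 ++ K2). split.
  - intros x [<-|Hx]; [exact HAB|]. apply in_app_or in Hx. destruct Hx; auto.
  - apply (r_orL Rs [] (K1 ++ K2) A B C); simpl.
    + apply prv_incl with (A :: K1); [exact HK1C|].
      intros x [<-|Hx]; [left|right; apply in_or_app]; auto.
    + apply prv_incl with (B :: K2); [exact HK2C|].
      intros x [<-|Hx]; [left|right; apply in_or_app]; auto.
Qed.

Definition nabla_image (T : form -> Prop) : form -> Prop :=
  fun x => exists C, x = Nabla C /\ T C.

Lemma nabla_image_list T L : (forall x, In x L -> nabla_image T x) ->
  exists L0, (forall C, In C L0 -> T C) /\ L = map Nabla L0.
Proof.
  induction L as [|a L IH]; intros HL; [exists []; split; [intros _ []|reflexivity]|].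
  destruct (HL a (or_introl eq_refl)) as [C [-> HC]].
  destruct IH as [L0 [HL0 ->]]; [intros x Hx; apply HL; right; exact Hx|].
  exists (C :: L0). split; [intros x [<-|Hx]; auto|reflexivity].
Qed.

Record prime_theory (T : form -> Prop) : Prop := {
  theory_closed : forall A, der T A -> T A;
  theory_consistent : ~ T Bot;
  theory_prime : forall A B, T (Or A B) -> T A \/ T B }.

Section PrimeTheory.
Variable T : form -> Prop.
Hypothesis HT : prime_theory T.

Lemma theory_closed_list L A : (forall x, In x L -> T x) -> prv Rs L A -> T A.
Proof. intros HL HLA. apply (theory_closed T HT). exists L. auto. Qed.

Lemma theory_closed1 B A : T B -> prv Rs [B] A -> T A.
Proof. intros HB. apply theory_closed_list. intros x [<-|[]]. exact HB. Qed.

Lemma theory_One : T One.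
Proof. apply (theory_closed_list []); [intros _ []|apply ax_one]. Qed.

Lemma theory_Top : T Top.
Proof. apply (theory_closed_list []); [intros _ []|apply ax_top]. Qed.

Lemma theory_And A B : T (And A B) <-> T A /\ T B.
Proof.
  split.
  - intros HAB. split; apply (theory_closed1 _ _ HAB).
    + exact (r_andL1 Rs [] [] A B A (ax_id Rs A)).
    + exact (r_andL2 Rs [] [] A B B (ax_id Rs B)).
  - intros [HA HB]. apply (theory_closed_list [A; B]); [intros x [<-|[<-|[]]]; auto|].
    apply r_andR; [apply prv_pair_l|apply prv_pair_r].
Qed.

Lemma theory_Tens A B : T (Tens A B) <-> T A /\ T B.
Proof.
  split.
  - intros HAB. split; apply (theory_closed1 _ _ HAB).
    + exact (r_tensL Rs [] [] A B A (prv_pair_l A B)).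
    + exact (r_tensL Rs [] [] A B B (prv_pair_r A B)).
  - intros [HA HB]. apply (theory_closed_list [A; B]); [intros x [<-|[<-|[]]]; auto|].
    exact (r_tensR Rs [A] [B] A B (ax_id Rs A) (ax_id Rs B)).
Qed.

Lemma theory_Or A B : T (Or A B) <-> T A \/ T B.
Proof.
  split; [apply (theory_prime T HT)|].
  intros [HA|HB]; [apply (theory_closed1 A)|apply (theory_closed1 B)]; auto.
  - apply r_orR1, ax_id.
  - apply r_orR2, ax_id.
Qed.

End PrimeTheory.

Definition avoids (I T : form -> Prop) : Prop := forall d, I d -> ~ der T d.

Section Lindenbaum.
Variables I S0 : form -> Prop.
Hypothesis I_or : forall a b, I a -> I b -> I (Or a b).
Hypothesis I_inhabited : exists d, I d.
Hypothesis S0_avoids : avoids I S0.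

Fixpoint saturation (n : nat) : form -> Prop :=
  match n with
  | 0 => S0
  | S n => fun x => saturation n x \/
             (form_code x = n /\ avoids I (extend (saturation n) x))
  end.

Definition saturated (x : form) : Prop := exists n, saturation n x.

Lemma saturation_mono n m x : n <= m -> saturation n x -> saturation m x.
Proof. induction 1; simpl; auto. Qed.

Lemma saturation_avoids n : avoids I (saturation n).
Proof.
  induction n as [|n IH]; simpl; [exact S0_avoids|].
  destruct (classic (exists x, form_code x = n /\ avoids I (extend (saturation n) x)))
    as [[x0 [Hcode Havoid]]|Hnone]; intros d Hd Hder.
  - apply (Havoid d Hd). revert Hder. apply der_mono.
    intros y [Hy|[Hy _]]; [left; exact Hy|right; apply form_code_inj; congruence].
  - apply (IH d Hd). revert Hder. apply der_mono.
    intros y [Hy|Hy]; [exact Hy|exfalso; apply Hnone; exists y; exact Hy].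
Qed.

Lemma saturated_avoids : avoids I saturated.
Proof.
  intros d Hd [L [HL HLd]].
  destruct (list_in_some_stage saturation L saturation_mono HL) as [N HN].
  apply (saturation_avoids N d Hd). exists L. auto.
Qed.

Lemma saturated_maximal A : avoids I (extend saturated A) -> saturated A.
Proof.
  intros HA. exists (S (form_code A)). right. split; [reflexivity|].
  intros d Hd Hder. apply (HA d Hd). revert Hder. apply der_mono.
  intros y [Hy|Hy]; [left; exists (form_code A); exact Hy|right; exact Hy].
Qed.

Lemma not_saturated_blocked A : ~ saturated A ->
  exists d, I d /\ der (extend saturated A) d.
Proof.
  intros HA. apply NNPP. intros Hnone. apply HA, saturated_maximal.
  intros d Hd Hder. apply Hnone. exists d. auto.
Qed.

Lemma saturated_prime : prime_theory saturated.
Proof.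
  split.
  - intros A HA. apply saturated_maximal. intros d Hd Hder.
    apply (saturated_avoids d Hd). exact (der_cut _ _ _ Hder HA).
  - intros HBot. destruct I_inhabited as [d Hd]. apply (saturated_avoids d Hd).
    exists [Bot]. split; [intros x [<-|[]]; exact HBot|exact (ax_bot Rs [] [] d)].
  - intros A B HAB. apply NNPP. intros Hnot. apply not_or_and in Hnot.
    destruct Hnot as [HA HB].
    destruct (not_saturated_blocked A HA) as [d1 [Hd1 [L1 [HL1 HLd1]]]].
    destruct (not_saturated_blocked B HB) as [d2 [Hd2 [L2 [HL2 HLd2]]]].
    apply (saturated_avoids (Or d1 d2) (I_or _ _ Hd1 Hd2)).
    apply der_orL with A B; [exact HAB| |].
    + exists L1. split; [exact HL1|apply r_orR1, HLd1].
    + exists L2. split; [exact HL2|apply r_orR2, HLd2].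
Qed.

Lemma lindenbaum : exists P, prime_theory P /\
  (forall x, S0 x -> P x) /\ (forall d, I d -> ~ P d).
Proof.
  exists saturated. split; [exact saturated_prime|split].
  - intros x Hx. exists 0. exact Hx.
  - intros d Hd HPd. apply (saturated_avoids d Hd). exists [d].
    split; [intros x [<-|[]]; exact HPd|apply ax_id].
Qed.

End Lindenbaum.

Lemma lindenbaum_formula S0 B : ~ der S0 B ->
  exists P, prime_theory P /\ (forall x, S0 x -> P x) /\ ~ P B.
Proof.
  intros HB.
  destruct (lindenbaum (fun d => prv Rs [d] B) S0) as [P [HP [HS HI]]].
  - intros a b Ha Hb. exact (r_orL Rs [] [] a b B Ha Hb).
  - exists B. apply ax_id.
  - intros d Hd [L [HL HLd]]. apply HB. exists L. split; [exact HL|].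
    exact (prv_cut_r L d B HLd Hd).
  - exists P. split; [exact HP|split; [exact HS|]]. apply HI, ax_id.
Qed.

Record world : Type := { theory :> form -> Prop; world_prime : prime_theory theory }.

Definition wle (u v : world) : Prop := forall A, u A -> v A.
Definition wR (u v : world) : Prop := forall A, u A -> v (Nabla A).

Lemma world_ext (u v : world) : (forall A, u A <-> v A) -> u = v.
Proof.
  destruct u as [u Hu], v as [v Hv]; simpl; intro H.
  assert (u = v) as <-.
  { apply functional_extensionality. intro A. apply propositional_extensionality, H. }
  f_equal. apply proof_irrelevance.
Qed.

Definition canonical_model : KModel := {|
  W := world; le := wle; R := wR; V := fun p w => w (Var p);
  le_refl := fun u A H => H;
  le_trans := fun u v w Huv Hvw A H => Hvw A (Huv A H);
  le_antisym := fun u v Huv Hvu => world_ext u v (fun A => conj (Huv A) (Hvu A));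
  R_mono := fun u v u' v' HR Hu Hv A H => Hv _ (HR A (Hu A H));
  V_up := fun p u v H Huv => Huv _ H |}.

Lemma wR_imp_elim (w v : world) A B : w (Imp A B) -> wR w v -> v A -> v B.
Proof.
  intros HAB Hwv HA. apply (theory_closed_list v (world_prime v) [A; Nabla (Imp A B)]).
  - intros x [<-|[<-|[]]]; [exact HA|exact (Hwv _ HAB)].
  - exact (r_impL Rs [A] [] [] A B B (ax_id Rs A) (ax_id Rs B)).
Qed.

Lemma wR_witness_imp (w : world) A B : ~ w (Imp A B) ->
  exists v : world, wR w v /\ v A /\ ~ v B.
Proof.
  intros HAB.
  destruct (lindenbaum_formula (extend (nabla_image w) A) B) as [P [HP [HS HB]]].
  - intros Hder. apply HAB. destruct (der_extend _ _ _ Hder) as [L [HL HLB]].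
    destruct (nabla_image_list _ _ HL) as [L0 [HL0 ->]].
    exact (theory_closed_list w (world_prime w) L0 _ HL0 (r_impR Rs L0 A B HLB)).
  - exists {| theory := P; world_prime := HP |}. simpl. split; [|split].
    + intros C HC. apply HS. left. exists C. auto.
    + apply HS. right. reflexivity.
    + exact HB.
Qed.

Lemma wR_witness_nabla (w : world) A : w (Nabla A) -> exists v : world, wR v w /\ v A.
Proof.
  intros HA. pose proof (world_prime w) as Hw.
  destruct (lindenbaum (fun C => ~ w (Nabla C)) (fun x => x = A)) as [P [HP [HS HI]]].
  - intros a b Ha Hb Hab.
    destruct (theory_prime w Hw _ _ (theory_closed1 w Hw _ _ Hab (prv_nabla_or a b)));
      contradiction.
  - exists Bot. intros HBot. apply (theory_consistent w Hw).
    exact (theory_closed1 w Hw _ _ HBot prv_nabla_bot).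
  - intros d Hd [L [HL HLd]]. apply Hd, (theory_closed1 w Hw _ _ HA), r_nabla.
    apply prv_incl with L; [exact HLd|]. intros x Hx. rewrite (HL x Hx). left. reflexivity.
  - exists {| theory := P; world_prime := HP |}. simpl. split; [|apply HS; reflexivity].
    intros C HC. apply NNPP. intros Hn. exact (HI C Hn HC).
Qed.

Lemma canonical_forces A : forall w : world, forces canonical_model w A <-> w A.
Proof.
  induction A as [p| | | |A IHA B IHB|A IHA B IHB|A IHA B IHB|A IHA B IHB|A IHA];
    intros w; pose proof (world_prime w) as Hw; simpl.
  - reflexivity.
  - split; [intros _; exact (theory_One w Hw)|auto].
  - split; [intros _; exact (theory_Top w Hw)|auto].
  - split; [intros []|exact (theory_consistent w Hw)].
  - rewrite IHA, IHB. symmetry. exact (theory_And w Hw A B).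
  - rewrite IHA, IHB. symmetry. exact (theory_Or w Hw A B).
  - rewrite IHA, IHB. symmetry. exact (theory_Tens w Hw A B).
  - split.
    + intros H. apply NNPP. intros Hn.
      destruct (wR_witness_imp w A B Hn) as [v [Hwv [HvA HvB]]].
      apply HvB, IHB, H; [exact Hwv|apply IHA, HvA].
    + intros H v Hwv HvA. apply IHB. apply (wR_imp_elim w v A B H Hwv), IHA, HvA.
  - split.
    + intros [v [Hvw HvA]]. apply Hvw, IHA, HvA.
    + intros H. destruct (wR_witness_nabla w A H) as [v [Hvw HvA]].
      exists v. split; [exact Hvw|apply IHA, HvA].
Qed.

Lemma prime_theory_nabla_preimage T : Rs SN \/ Rs SH ->
  prime_theory T -> prime_theory (fun A => T (Nabla A)).
Proof.
  intros HN HT. split.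
  - intros A [L [HL HLA]]. apply (theory_closed_list T HT (map Nabla L)).
    + intros x Hx. apply in_map_iff in Hx. destruct Hx as [y [<- Hy]]. auto.
    + exact (prv_nabla_rule L A HN HLA).
  - intros HBot. exact (theory_consistent T HT (theory_closed1 T HT _ _ HBot prv_nabla_bot)).
  - intros A B HAB. exact (theory_prime T HT _ _ (theory_closed1 T HT _ _ HAB (prv_nabla_or A B))).
Qed.

Lemma prime_theory_box_preimage T : Rs SH ->
  prime_theory T -> prime_theory (fun A => T (box A)).
Proof.
  intros HH HT. split.
  - intros A [L [HL HLA]]. apply (theory_closed_list T HT (map (fun x => box x) L)).
    + intros x Hx. apply in_map_iff in Hx. destruct Hx as [y [<- Hy]]. auto.
    + exact (prv_box_rule L A HLA).
  - intros HBot. exact (theory_consistent T HT (theory_closed1 T HT _ _ HBot (prv_box_bot HH))).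
  - intros A B HAB.
    exact (theory_prime T HT _ _ (theory_closed1 T HT _ _ HAB (prv_box_or HH A B))).
Qed.

Definition world_pi (HN : Rs SN \/ Rs SH) (w : world) : world :=
  {| theory := fun A => w (Nabla A);
     world_prime := prime_theory_nabla_preimage w HN (world_prime w) |}.

Definition world_box (HH : Rs SH) (w : world) : world :=
  {| theory := fun A => w (box A);
     world_prime := prime_theory_box_preimage w HH (world_prime w) |}.

Lemma world_pi_spec HN :
  order_preserving canonical_model (world_pi HN) /\ R_via canonical_model (world_pi HN).
Proof. split; [intros u v Huv A; apply Huv|intros u v; apply iff_refl]. Qed.

Lemma world_pi_iso (HH : Rs SH) : order_iso canonical_model (world_pi (or_intror HH)).
Proof.
  exists (world_box HH). split; [|split; [|split]].
  - intros u. apply world_ext. intros A. simpl. split; intros HA.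
    + exact (theory_closed1 u (world_prime u) _ _ HA (prv_nabla_box_elim A)).
    + exact (theory_closed1 u (world_prime u) _ _ HA (prv_nabla_box_intro HH A)).
  - intros u. apply world_ext. intros A. simpl. split; intros HA.
    + exact (theory_closed1 u (world_prime u) _ _ HA (prv_box_nabla_elim HH A)).
    + exact (theory_closed1 u (world_prime u) _ _ HA (prv_box_nabla_intro A)).
  - intros u v Huv A. apply Huv.
  - intros u v Huv A. apply Huv.
Qed.

Lemma wR_serial : Rs SwF -> forall u : world, exists v : world, wR u v.
Proof.
  intros HwF u. pose proof (world_prime u) as Hu.
  destruct (lindenbaum_formula (nabla_image u) Bot) as [P [HP [HS _]]].
  - intros [L [HL HLBot]]. destruct (nabla_image_list _ _ HL) as [L0 [HL0 ->]].
    apply (theory_consistent u Hu), (theory_closed1 u Hu (big_tens L0)).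
    + exact (theory_closed_list u Hu L0 _ HL0 (prv_big_tens L0)).
    + apply s_wF; [exact HwF|]. exact (prv_nabla_big_tens Bot L0 [] HLBot).
  - exists {| theory := P; world_prime := HP |}. intros C HC. apply HS. exists C. auto.
Qed.

Lemma canonical_K_model : K_model Rs canonical_model.
Proof.
  split; [|split; [|split; [|split]]].
  - intros HN. exists (world_pi (or_introl HN)). exact (world_pi_spec _).
  - intros HH. exists (world_pi (or_intror HH)).
    destruct (world_pi_spec (or_intror HH)) as [Hmono HR].
    split; [exact Hmono|split; [exact HR|exact (world_pi_iso HH)]].
  - intros HP u v Huv A HA. apply (theory_closed1 v (world_prime v) _ _ (Huv A HA)).
    exact (s_P Rs [Nabla A] A HP (ax_id Rs _)).
  - intros HF u A HA. apply (theory_closed1 u (world_prime u) _ _ HA).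
    exact (s_F Rs [A] A HF (ax_id Rs _)).
  - exact wR_serial.
Qed.

End Completeness.

Theorem theorem8p8 (Rs : scheme -> Prop) (G : list form) (A : form) :
  (forall M : KModel, K_model Rs M -> valid_in M G A) -> prv Rs G A.
Proof.
  intros Hvalid. apply NNPP. intros Hnot.
  destruct (lindenbaum_formula Rs (fun x => In x G) A) as [P [HP [HG HA]]].
  { intros [L [HL HLA]]. exact (Hnot (prv_incl Rs L G A HLA HL)). }
  set (w := {| theory := P; world_prime := HP |} : world Rs).
  apply HA, (canonical_forces Rs A w), (Hvalid _ (canonical_K_model Rs)).
  intros B HB. apply (canonical_forces Rs B w), HG, HB.
Qed.
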